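(* Let $\mathbf{C}$ be a category of $\mathbf{FI}$ type and $P$ a character polynomial of degree $\leq c$. Then the expectation $\mathbb{E}_{G_d}[P]:=\frac{1}{|G_d|}\sum_{\sigma\in G_d}P(\sigma)$ does not depend on $d$ for all objects $d\geq c$. Furthermore, if $P$ is the character of a free $\mathbf{C}$-module, then $\mathbb{E}_{G_d}[P]$ is a non-negative integer for every $d$ and is monotonically non-decreasing in $d$ (i.e. $\mathbb{E}_{G_d}[P]\leq\mathbb{E}_{G_e}[P]$ whenever $d\leq e$).
   Context: A category $\mathbf{C}$ is of $\mathbf{FI}$ type if: (1) all Hom-sets are finite; (2) every morphism is a monomorphism and every endomorphism is an isomorphism; (3) for all objects $c,d$ the group $G_d=\mathrm{Aut}_{\mathbf{C}}(d)$ acts transitively on $\mathrm{Hom}_{\mathbf{C}}(c,d)$; (4) for every $d$ only finitely many isomorphism classes of $c$ have $\mathrm{Hom}(c,d)\neq\emptyset$; (5) every pair $c_1\to d\leftarrow c_2$ has a pullback, and every pair $f_i:p\to c_i$ has a weak push-out, i.e. a commutative pullback square $g_i:c_i\to d$ such that for every other pullback square $h_i:c_i\to z$ with $h_1f_1=h_2f_2$ there is a unique $h:d\to z$ with $hg_i=h_i$. Write $c\leq d$ (or $d\geq c$) if $\mathrm{Hom}(c,d)\neq\emptyset$. Binomial set: $\binom{d}{c}=\mathrm{Hom}(c,d)/G_c$. For a conjugacy class $\mu\subseteq G_c$ (write $|\mu|=c$), $\binom{X}{\mu}$ is the class function on every $G_d$ given by $\sigma\mapsto\#\{[f]\in\binom{d}{c}:\exists\psi\in\mu,\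 \sigma f=f\psi\}$. A character polynomial is a $\mathbb{C}$-linear combination of these; it has degree $\leq d$ if each $\binom{X}{\mu}$ appearing nontrivially has $|\mu|\leq d$. For a finite-dimensional $G_c$-representation $V$, $\mathrm{Ind}_c(V)$ is the $\mathbf{C}$-module $d\mapsto\mathbb{C}[\mathrm{Hom}(c,d)]\otimes_{\mathbb{C}[G_c]}V$; a free $\mathbf{C}$-module is a finite direct sum of these, and its character assigns to each $G_d$ the character of its value at $d$. *)

From HB Require Import structures.
From mathcomp Require Import all_boot all_order all_algebra.
From mathcomp Require Import complex Rstruct.

Set Implicit Arguments.
Unset Strict Implicit.
Unset Printing Implicit Defensive.

Import Order.TTheory GRing.Theory Num.Theory.
Local Open Scope ring_scope.

Definition Cx : numClosedFieldType := (Rdefinitions.R)[i].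

(* A category whose Hom-sets are finite types (axiom (1) of FI type). *)
Record category := Category {
  obj : Type;
  hom : obj -> obj -> finType;
  idm : forall a, hom a a;
  comp : forall a b c, hom b c -> hom a b -> hom a c }.

Arguments idm {_} a.
Arguments comp {_ _ _ _} g f.

Section FI.
Variable C : category.

Definition is_category : Prop :=
  (forall (a b : obj C) (f : hom a b), comp (idm b) f = f /\ comp f (idm a) = f) /\
  (forall (a b c d : obj C) (h : hom c d) (g : hom b c) (f : hom a b),
      comp h (comp g f) = comp (comp h g) f).

Definition is_iso (a b : obj C) (f : hom a b) : Prop :=
  exists g : hom b a, comp g f = idm a /\ comp f g = idm b.

Definition isomorphic (a b : obj C) : Prop := exists f : hom a b, is_iso f.

Definition le_obj (c d : obj C) : Prop := inhabited (hom c d).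

Definition is_pullback (p c1 c2 d : obj C) (g1 : hom p c1) (g2 : hom p c2)
    (f1 : hom c1 d) (f2 : hom c2 d) : Prop :=
  comp f1 g1 = comp f2 g2 /\
  forall (z : obj C) (h1 : hom z c1) (h2 : hom z c2), comp f1 h1 = comp f2 h2 ->
    exists! h : hom z p, comp g1 h = h1 /\ comp g2 h = h2.

Definition FI_type : Prop :=
  is_category /\
  (forall (a b c : obj C) (f : hom b c) (g h : hom a b), comp f g = comp f h -> g = h) /\
  (forall (d : obj C) (f : hom d d), is_iso f) /\
  (forall (c d : obj C) (f g : hom c d), exists s : hom d d, comp s f = g) /\
  (forall d : obj C, exists (n : nat) (cs : 'I_n -> obj C),
      forall c : obj C, le_obj c d -> exists i : 'I_n, isomorphic c (cs i)) /\
  (forall (c1 c2 d : obj C) (f1 : hom c1 d) (f2 : hom c2 d),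
      exists (p : obj C) (g1 : hom p c1) (g2 : hom p c2), is_pullback g1 g2 f1 f2) /\
  (forall (p c1 c2 : obj C) (f1 : hom p c1) (f2 : hom p c2),
      exists (d : obj C) (g1 : hom c1 d) (g2 : hom c2 d),
        is_pullback f1 f2 g1 g2 /\
        forall (z : obj C) (h1 : hom c1 z) (h2 : hom c2 z), is_pullback f1 f2 h1 h2 ->
          exists! h : hom d z, comp h g1 = h1 /\ comp h g2 = h2).

(* conjugacy classes of G_c = Aut(c) = Hom(c,c) *)
Definition is_conj_class (c : obj C) (mu : {set hom c c}) : Prop :=
  exists psi0 : hom c c,
    mu = [set psi | [exists tau : hom c c, comp tau psi == comp psi0 tau]].

Definition binom_set (c d : obj C) : {set {set hom c d}} :=
  [set [set comp f tau | tau : hom c c] | f : hom c d].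

Definition binomX (c : obj C) (mu : {set hom c c}) (d : obj C) (sigma : hom d d) : nat :=
  #|[set O in binom_set c d |
      [exists f in O, exists psi in mu, comp sigma f == comp f psi]]|.

Definition expect (d : obj C) (F : hom d d -> Cx) : Cx :=
  (#|hom d d|%:R)^-1 * \sum_(s : hom d d) F s.

Record cp_term := CpTerm {
  cp_obj : obj C;
  cp_class : {set hom cp_obj cp_obj};
  cp_coef : Cx }.

Definition charpoly := seq cp_term.

Definition is_charpoly (P : charpoly) : Prop :=
  forall t, List.In t P -> is_conj_class (cp_class t).

Definition charpoly_deg_le (P : charpoly) (c : obj C) : Prop :=
  forall t, List.In t P -> cp_coef t != 0 -> le_obj (cp_obj t) c.

Definition cp_eval (P : charpoly) (d : obj C) (sigma : hom d d) : Cx :=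
  \sum_(t <- P) cp_coef t * (binomX (cp_class t) sigma)%:R.

(* finite-dimensional representations of G_c, as matrix representations
   (column-vector convention: tau acts by v |-> rho tau *m v) *)
Record rep_data := RepData {
  rd_obj : obj C;
  rd_dim : nat;
  rd_rep : hom rd_obj rd_obj -> 'M[Cx]_rd_dim }.

Definition is_rep (V : rep_data) : Prop :=
  @rd_rep V (idm (rd_obj V)) = 1%:M /\
  forall g h : hom (rd_obj V) (rd_obj V), @rd_rep V (comp g h) = @rd_rep V g *m @rd_rep V h.

(* Character of Ind_c(V)(d) = C[Hom(c,d)] (x)_{C[G_c]} V at sigma in G_d.
   It is realised as the quotient of W = C[Hom(c,d)] (x)_C V (basis
   Hom(c,d) x 'I_n) by the subspace U spanned by the relations
   (f tau) (x) e_k - f (x) (tau e_k).  The trace of sigma on W/U is the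
   trace on W minus the trace on the (sigma-stable) subspace U. *)
Section Induced.
Variables (V : rep_data) (d : obj C).
Let c := rd_obj V.
Let n := rd_dim V.
Let rho := @rd_rep V.
Let I := (hom c d * 'I_n)%type.
Let m := #|{: I}|.
Let J := (hom c d * hom c c * 'I_n)%type.

Definition ind_basis (x : I) : 'rV[Cx]_m := delta_mx 0 (enum_rank x).

Definition ind_act (sigma : hom d d) : 'M[Cx]_m :=
  \matrix_(i < m, j < m)
    ((enum_val j == (comp sigma (enum_val i).1, (enum_val i).2)) %:R : Cx).

Definition ind_rel (r : J) : 'rV[Cx]_m :=
  let: (f, tau, k) := r in
  ind_basis (comp f tau, k) - \sum_(l < n) rho tau l k *: ind_basis (f, l).

Definition ind_rels : 'M[Cx]_(#|{: J}|, m) := \matrix_(r < #|{: J}|) ind_rel (enum_val r).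

Definition ind_char (sigma : hom d d) : Cx :=
  let B := row_base ind_rels in
  \tr (ind_act sigma) - \tr (B *m ind_act sigma *m pinvmx B).
End Induced.

(* a free C-module: a finite direct sum of Ind_{c_i}(V_i); its character *)
Definition free_module := seq rep_data.

Definition free_char (M : free_module) (d : obj C) (sigma : hom d d) : Cx :=
  \sum_(V <- M) ind_char V sigma.

End FI.

(* Since [G_d] acts transitively on [Hom(c, d)], for
   fixed [f] each [g] equals [s f] for exactly [|G_d| / |Hom(c, d)|] of the
   [s] in [G_d]; summing the indicator of [s f = f psi] (psi in mu) over the
   [G_c]-orbits of [Hom(c, d)] gives [E[(X choose mu)] = |mu| / |G_c|] for
   every [d >= c].  For [Ind_c(V)], the mean of the action matrices of [G_d]
   on [C[Hom(c, d)] (x) V] is the idempotent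
   [e_(f,k) |-> |Hom(c, d)|^-1 sum_g e_(g,k)], which factors through [V]; as
   the trace of an idempotent is its rank, the expected character is [dim V]
   minus the rank of the relations [v - tau v], i.e. [dim V_(G_c)] if
   [c <= d] and [0] otherwise. *)

From HB Require Import structures.
From mathcomp Require Import all_boot all_order all_algebra.
From mathcomp Require Import complex Rstruct.

Set Implicit Arguments.
Unset Strict Implicit.
Unset Printing Implicit Defensive.

Import Order.TTheory GRing.Theory Num.Theory.
Local Open Scope ring_scope.

Section IdempotentTrace.
Variable F : numFieldType.

Lemma mxtrace_idem r (Q : 'M[F]_r) : Q *m Q = Q -> \tr Q = (\rank Q)%:R.
Proof.
move=> QQ; have [X XA] := row_fullP (col_base_full Q).
move: X XA (row_base_free Q) (mulmx_base Q).
move: (col_base Q) (row_base Q) => A B X XA Bfree QAB.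
have BA : B *m A = 1%:M.
  apply: (row_free_inj Bfree); rewrite /= mul1mx.
  have : X *m (A *m B *m (A *m B)) = X *m (A *m B) by rewrite QAB QQ.
  by rewrite !(mulmxA X) XA !mul1mx mulmxA; apply.
by rewrite -[in LHS]QAB mxtrace_mulC BA mxtrace1.
Qed.

Lemma mxtrace_compress_idem m r (P : 'M[F]_m) (B : 'M_(r, m)) :
  P *m P = P -> row_free B -> (B *m P <= B)%MS ->
  \tr (B *m P *m pinvmx B) = (\rank (B *m P))%:R.
Proof.
move=> PP Bfree BP_B; set Q := B *m P *m pinvmx B.
have QB : Q *m B = B *m P by rewrite mulmxKpV.
have QQ : Q *m Q = Q.
  by apply: (row_free_inj Bfree); rewrite /= -mulmxA !QB mulmxA QB -mulmxA PP.
by rewrite mxtrace_idem // -(mxrankMfree _ Bfree) QB.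
Qed.

Lemma mxtrace_dim0 k (A : 'M[F]_k) : k = 0%N -> \tr A = 0.
Proof. by move=> k0; apply: big1 => [[i Hi]] _; exfalso; rewrite k0 in Hi. Qed.

End IdempotentTrace.

Lemma card_set_sep (T : finType) (B : {set T}) (Q : pred T) :
  #|[set x in B | Q x]| = (\sum_(x in B) Q x)%N.
Proof. by rewrite -sum1dep_card big_mkcondr; apply: eq_bigr => x _; case: (Q x). Qed.

Section Expectation.
Variables (C : category) (d : obj C).

Lemma expect_sum (I : Type) (r : seq I) (F : I -> hom d d -> Cx) :
  expect (fun s => \sum_(i <- r) F i s) = \sum_(i <- r) expect (F i).
Proof. by rewrite /expect exchange_big mulr_sumr. Qed.

Lemma expectZ (a : Cx) (F : hom d d -> Cx) :
  expect (fun s => a * F s) = a * expect F.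
Proof. by rewrite /expect -mulr_sumr mulrCA. Qed.

End Expectation.

Section Coinvariants.
Variables (C : category) (V : rep_data C).
Local Notation c := (rd_obj V).
Local Notation n := (rd_dim V).

Definition coinv_rel (x : hom c c * 'I_n) : 'rV[Cx]_n :=
  delta_mx 0 x.2 - \sum_(l < n) @rd_rep _ V x.1 l x.2 *: delta_mx 0 l.

Definition coinv_rels : 'M[Cx]_(#|{: hom c c * 'I_n}|, n) :=
  \matrix_(r < #|{: hom c c * 'I_n}|) coinv_rel (enum_val r).

(* The rows of [coinv_rels] span the relations [v - tau v], so this is the
   dimension of the coinvariants [V_(G_c)]. *)
Definition coinv_dim : nat := (n - \rank coinv_rels)%N.

End Coinvariants.

Section FIType.
Variable C : category.
Hypothesis HC : FI_type C.
Implicit Types a b c d e : obj C.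

Lemma compf1 a b (f : hom a b) : comp f (idm a) = f.
Proof. by case: HC => [[H _] _]; case: (H a b f). Qed.

Lemma compA a b c d (h : hom c d) (g : hom b c) (f : hom a b) :
  comp h (comp g f) = comp (comp h g) f.
Proof. by case: HC => [[_ H] _]; apply: H. Qed.

Lemma compI a b c (f : hom b c) : injective (fun g : hom a b => comp f g).
Proof. by case: HC => _ [H _] g h; apply: H. Qed.

Lemma aut_invertible d (s : hom d d) :
  exists t : hom d d, comp t s = idm d /\ comp s t = idm d.
Proof. by case: HC => _ [_ [H _]]; apply: H. Qed.

Lemma hom_transitive c d (f g : hom c d) : exists s : hom d d, comp s f = g.
Proof. by case: HC => _ [_ [_ [H _]]]; apply: H. Qed.

Lemma compIr c d (tau : hom c c) : injective (fun g : hom c d => comp g tau).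
Proof.
have [t [_ tau_t]] := aut_invertible tau => g h /= E.
by rewrite -(compf1 g) -(compf1 h) -tau_t !compA E.
Qed.

Lemma le_obj_trans a b c : le_obj a b -> le_obj b c -> le_obj a c.
Proof. by case=> f [g]; constructor; exact: comp g f. Qed.

Lemma hom_nonempty_mono c d e :
  le_obj d e -> ((0 < #|hom c d|) <= (0 < #|hom c e|))%N.
Proof.
case=> g; case: (posnP #|hom c d|) => [// | /card_gt0P [f _]].
by rewrite lt0b; apply/card_gt0P; exists (comp g f).
Qed.

Lemma card_hom_neq0 a b (f : hom a b) : #|hom a b|%:R != 0 :> Cx.
Proof. by rewrite pnatr_eq0 -lt0n; apply/card_gt0P; exists f. Qed.

Definition ntransp c d (f g : hom c d) : nat := \sum_(s : hom d d) (comp s f == g).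

Lemma ntransp_mul_card c d (f g : hom c d) : (ntransp f g * #|hom c d|)%N = #|hom d d|.
Proof.
have ntransp_f g' : ntransp f g' = ntransp f f.
  have [s sf] := hom_transitive f g'.
  rewrite /ntransp (reindex_inj (@compI _ _ _ s)) /=; apply: eq_bigr => x _.
  by rewrite -compA -{1}sf (inj_eq (@compI _ _ _ s)).
have one_image s : (\sum_(g' : hom c d) (comp s f == g'))%N = 1%N.
  rewrite (bigD1 (comp s f)) //= eqxx big1 // => g' /negbTE.
  by rewrite eq_sym => ->.
have -> : #|hom d d| = (\sum_(s : hom d d) \sum_(g' : hom c d) (comp s f == g'))%N.
  by rewrite (eq_bigr (fun=> 1%N)) // sum1_card.
rewrite exchange_big /= (eq_bigr (fun=> ntransp f f)) => [|g' _]; last exact: ntransp_f.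
by rewrite ntransp_f big_const iter_addn_0 mulnC.
Qed.

Lemma ntransp_const c d (f g f' g' : hom c d) : ntransp f g = ntransp f' g'.
Proof.
apply/eqP; rewrite -(@eqn_pmul2r #|hom c d|); last by apply/card_gt0P; exists f.
by rewrite !ntransp_mul_card.
Qed.

Lemma ntransp_ratio c d (f g : hom c d) :
  (ntransp f g)%:R = #|hom d d|%:R / #|hom c d|%:R :> Cx.
Proof.
by rewrite -(ntransp_mul_card f g) natrM mulfK ?(card_hom_neq0 f).
Qed.

Definition rorbit c d (f : hom c d) : {set hom c d} := [set comp f tau | tau : hom c c].

Lemma binom_setE c d : binom_set c d = [set rorbit f | f : hom c d].
Proof. by []. Qed.

Lemma rorbit_id c d (f : hom c d) : f \in rorbit f.
Proof. by apply/imsetP; exists (idm c); rewrite ?compf1. Qed.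

Lemma rorbit_sub c d (f g : hom c d) : g \in rorbit f -> rorbit g \subset rorbit f.
Proof.
case/imsetP => tau _ ->; apply/subsetP => h /imsetP [a _ ->].
by apply/imsetP; exists (comp tau a); rewrite ?compA.
Qed.

Lemma rorbit_eq c d (f g : hom c d) : g \in rorbit f -> rorbit g = rorbit f.
Proof.
move=> gf; apply/eqP; rewrite eqEsubset rorbit_sub //=; apply: rorbit_sub.
case/imsetP: gf => tau _ ->; have [t [_ tau_t]] := aut_invertible tau.
by apply/imsetP; exists t; rewrite // -compA tau_t compf1.
Qed.

Lemma card_rorbit c d (f : hom c d) : #|rorbit f| = #|hom c c|.
Proof. by rewrite card_imset ?cardsT //; apply: compI. Qed.

Lemma binom_set_partition c d : partition (binom_set c d) [set: hom c d].
Proof.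
rewrite binom_setE; apply/and3P; split.
- rewrite eqEsubset subsetT /=; apply/subsetP => f _.
  by apply/bigcupP; exists (rorbit f); rewrite ?rorbit_id //; apply: imset_f.
- apply/trivIsetP => _ _ /imsetP [f1 _ ->] /imsetP [f2 _ ->] neq.
  apply/pred0P => g /=; apply/negbTE/andP => [[g1 g2]].
  by move: neq; rewrite -(rorbit_eq g1) -(rorbit_eq g2) eqxx.
- by apply/imsetP => -[f _ /setP /(_ f)]; rewrite rorbit_id inE.
Qed.

Lemma card_binom_set c d : (#|binom_set c d| * #|hom c c|)%N = #|hom c d|.
Proof.
rewrite -[#|hom c d|]cardsT.
rewrite (@card_uniform_partition _ #|hom c c| _ _ _ (binom_set_partition c d)) //.
by move=> _ /imsetP [f _ ->]; apply: card_rorbit.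
Qed.

Lemma conj_class_conjg c (mu : {set hom c c}) (tau t psi : hom c c) :
  is_conj_class mu -> comp t tau = idm c -> comp tau t = idm c ->
  psi \in mu -> comp tau (comp psi t) \in mu.
Proof.
move=> [psi0 ->] t_tau tau_t; rewrite !inE => /existsP [a /eqP a_psi].
apply/existsP; exists (comp a t); apply/eqP.
by rewrite !compA -(compA a t tau) t_tau compf1 a_psi -!compA.
Qed.

(* A witness [psi] for [f tau] yields the conjugate witness [tau psi tau^-1] for [f]. *)
Lemma twisted_fix_rorbit c d (mu : {set hom c c}) (sigma : hom d d) (f : hom c d) :
  is_conj_class mu ->
  [exists g in rorbit f, exists psi in mu, comp sigma g == comp g psi] =
  [exists psi in mu, comp sigma f == comp f psi].
Proof.
move=> mu_class; apply/existsP/idP => [[_ /andP [/imsetP [tau _ ->]]] | fix_f]; last first.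
  by exists f; rewrite rorbit_id.
case/existsP => psi /andP [psi_mu /eqP fix_ftau].
have [t [t_tau tau_t]] := aut_invertible tau.
apply/existsP; exists (comp tau (comp psi t)); rewrite conj_class_conjg //=.
rewrite (compA f) (compA (comp f tau)) -fix_ftau.
by rewrite -(compA sigma _ t) -(compA f tau t) tau_t compf1.
Qed.

Lemma sum_twisted_fix c d (mu : {set hom c c}) (f : hom c d) :
  (\sum_(sigma : hom d d) [exists psi in mu, comp sigma f == comp f psi]
   = #|mu| * ntransp f f)%N.
Proof.
have unique_psi sigma : ([exists psi in mu, comp sigma f == comp f psi] : nat)
    = (\sum_(psi in mu) (comp sigma f == comp f psi))%N.
  case: existsP => [[psi1 /andP [psi1_mu /eqP fix1]] | no_psi].
    rewrite (bigD1 psi1) //= fix1 eqxx big1 // => psi /andP [_ neq].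
    by apply/eqP; rewrite eqb0; apply: contra neq => /eqP /compI ->.
  rewrite big1 // => psi psi_mu; apply/eqP; rewrite eqb0; apply/negP => fix_psi.
  by apply: no_psi; exists psi; rewrite psi_mu.
rewrite (eq_bigr _ (fun s _ => unique_psi s)) exchange_big /= -sum_nat_const.
by apply: eq_bigr => psi _; rewrite -(ntransp_const f (comp f psi) f f).
Qed.

Lemma sum_binomX c d (mu : {set hom c c}) (f0 : hom c d) : is_conj_class mu ->
  ((\sum_(sigma : hom d d) binomX mu sigma) * #|hom c c| = #|mu| * #|hom d d|)%N.
Proof.
move=> mu_class; rewrite /binomX (eq_bigr _ (fun s _ => card_set_sep _ _)) exchange_big /=.
rewrite (eq_bigr (fun=> #|mu| * ntransp f0 f0)%N) => [|_ /imsetP [f _ ->]]; last first.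
  rewrite (ntransp_const f0 f0 f f) -sum_twisted_fix; apply: eq_bigr => s _.
  by rewrite twisted_fix_rorbit.
by rewrite sum_nat_const -(ntransp_mul_card f0 f0) -card_binom_set mulnAC mulnC -mulnA.
Qed.

Lemma expect_binomX c d (mu : {set hom c c}) (f0 : hom c d) : is_conj_class mu ->
  expect (fun sigma : hom d d => (binomX mu sigma)%:R) = #|mu|%:R / #|hom c c|%:R.
Proof.
move=> mu_class; have := congr1 (fun k => k%:R : Cx) (sum_binomX f0 mu_class).
rewrite /expect /= !natrM natr_sum => /(canRL (mulfK (card_hom_neq0 (idm c)))) ->.
by rewrite mulrCA -mulrA mulVKf ?(card_hom_neq0 (idm d)).
Qed.

Lemma expect_cp_eval c d (P : charpoly C) :
  is_charpoly P -> charpoly_deg_le P c -> le_obj c d ->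
  expect (cp_eval P (d:=d)) =
  \sum_(t <- P) cp_coef t * (#|cp_class t|%:R / #|hom (cp_obj t) (cp_obj t)|%:R).
Proof.
move=> + + cd; rewrite /cp_eval expect_sum.
elim: P => [|t P IH] P_classes P_deg; rewrite ?big_nil // !big_cons expectZ.
congr (_ + _); last by apply: IH => u uP; [apply: P_classes | apply: P_deg]; right.
have [-> | coef_neq0] := eqVneq (cp_coef t) 0; first by rewrite !mul0r.
have [f0] := le_obj_trans (P_deg t (or_introl erefl) coef_neq0) cd.
by rewrite (expect_binomX f0) //; apply: P_classes; left.
Qed.

Section InducedMean.
Variables (V : rep_data C) (d : obj C).
Local Notation c := (rd_obj V).
Local Notation n := (rd_dim V).
Local Notation I := (hom c d * 'I_n)%type.
Local Notation m := #|{: I}|.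
Local Notation basis := (@ind_basis C V d).
Local Notation rel := (@ind_rel C V d).

Definition ind_collapse : 'M[Cx]_(m, n) := \matrix_(i, k) ((enum_val i).2 == k)%:R.

Definition ind_spread : 'M[Cx]_(n, m) :=
  \matrix_(k, j) (#|hom c d|%:R^-1 * ((enum_val j).2 == k)%:R).

Definition ind_mean : 'M[Cx]_m := #|hom d d|%:R^-1 *: \sum_(s : hom d d) ind_act V s.

Lemma ind_meanE : ind_mean = ind_collapse *m ind_spread.
Proof.
apply/matrixP => i j; rewrite !mxE summxE.
under eq_bigr => s _ do rewrite !mxE.
under [in RHS]eq_bigr => l _ do rewrite !mxE.
case: (enum_val i) => f k; case: (enum_val j) => g l /=.
rewrite [in RHS](bigD1 k) //= eqxx mul1r [in RHS]big1 ?addr0 => [|l' /negbTE]; last first.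
  by rewrite eq_sym => ->; rewrite mul0r.
have [-> | neq] := eqVneq l k; last first.
  by rewrite big1 ?mulr0 // => s _; rewrite xpair_eqE (negbTE neq) andbF.
under eq_bigr => s _ do rewrite xpair_eqE eqxx andbT eq_sym.
rewrite -natr_sum (ntransp_ratio f g) mulrA mulVf ?(card_hom_neq0 (idm d)) //.
by rewrite mul1r mulr1.
Qed.

Lemma ind_spread_collapse (f0 : hom c d) : ind_spread *m ind_collapse = 1%:M.
Proof.
apply/matrixP => k k'; rewrite !mxE.
under eq_bigr do rewrite !mxE.
rewrite -(big_enum_val (fun x : I => #|hom c d|%:R^-1 * (x.2 == k)%:R * (x.2 == k')%:R)) /=.
rewrite -(pair_bigA _ (fun (f : hom c d) (l : 'I_n) =>
  #|hom c d|%:R^-1 * (l == k)%:R * (l == k')%:R)) /=.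
rewrite (eq_bigr (fun=> #|hom c d|%:R^-1 * (k == k')%:R)) => [|f _]; last first.
  rewrite (bigD1 k) //= eqxx mulr1 big1 ?addr0 // => l /negbTE neq /=.
  by rewrite neq mulr0 mul0r.
rewrite sumr_const -[#|xpredT|]/(#|hom c d|) -mulrnAl -[_^-1 *+ _]mulr_natr.
by rewrite mulVf ?mul1r ?(card_hom_neq0 f0).
Qed.

Lemma ind_mean_idem (f0 : hom c d) : ind_mean *m ind_mean = ind_mean.
Proof.
by rewrite ind_meanE mulmxA -(mulmxA ind_collapse) (ind_spread_collapse f0) mulmx1.
Qed.

Lemma ind_spread_free (f0 : hom c d) : row_free ind_spread.
Proof.
rewrite /row_free eqn_leq rank_leq_row /=.
by rewrite -{1}(mxrank1 Cx n) -(ind_spread_collapse f0) mxrankM_maxl.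
Qed.

Lemma rank_ind_mean (f0 : hom c d) : \rank ind_mean = n.
Proof.
rewrite ind_meanE (mxrankMfree _ (ind_spread_free f0)).
apply/eqP; rewrite eqn_leq rank_leq_col /=.
by rewrite -{1}(mxrank1 Cx n) -(ind_spread_collapse f0) mxrankM_maxr.
Qed.

Lemma ind_basis_collapse (x : I) : basis x *m ind_collapse = delta_mx 0 x.2.
Proof.
rewrite /ind_basis -rowE; apply/matrixP => i l; rewrite !mxE enum_rankK.
by rewrite eq_sym (ord1 i).
Qed.

Definition ind_fibre_sum (k : 'I_n) : 'rV[Cx]_m := \sum_(g : hom c d) basis (g, k).

Lemma ind_basis_mean (x : I) :
  basis x *m ind_mean = #|hom c d|%:R^-1 *: ind_fibre_sum x.2.
Proof.
rewrite ind_meanE mulmxA ind_basis_collapse -rowE; apply/matrixP => i j.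
rewrite !mxE summxE; congr (_ * _).
under eq_bigr do rewrite !mxE.
case E: (enum_val j) => [g' k'] /=.
have -> : j = enum_rank (g', k') by rewrite -E enum_valK.
rewrite (ord1 i) eqxx /= (bigD1 g') //= (inj_eq enum_rank_inj) xpair_eqE eqxx /=.
rewrite big1 ?addr0 // => g neq.
by rewrite (inj_eq enum_rank_inj) xpair_eqE eq_sym (negbTE neq).
Qed.

Lemma ind_rel_collapse (f : hom c d) (tau : hom c c) (k : 'I_n) :
  rel (f, tau, k) *m ind_collapse = coinv_rel (tau, k).
Proof.
rewrite /ind_rel /coinv_rel /= mulmxBl mulmx_suml ind_basis_collapse; congr (_ - _).
by apply: eq_bigr => l _; rewrite -scalemxAl ind_basis_collapse.
Qed.

Lemma ind_rel_mean (f : hom c d) (tau : hom c c) (k : 'I_n) :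
  rel (f, tau, k) *m ind_mean = #|hom c d|%:R^-1 *: \sum_(g : hom c d) rel (g, tau, k).
Proof.
rewrite /ind_rel /= mulmxBl mulmx_suml ind_basis_mean /=.
under eq_bigr do rewrite -scalemxAl ind_basis_mean /= scalerA mulrC -scalerA.
rewrite sumrB exchange_big /= -scaler_sumr -scalerBr; congr (_ *: (_ - _)).
  by rewrite /ind_fibre_sum (reindex_inj (@compIr c d tau)).
by apply: eq_bigr => l _; rewrite scaler_sumr.
Qed.

Lemma ind_rels_mean_sub : (ind_rels V d *m ind_mean <= ind_rels V d)%MS.
Proof.
have rel_sub x : (rel x <= ind_rels V d)%MS.
  have -> : rel x = row (enum_rank x) (ind_rels V d) by rewrite rowK enum_rankK.
  exact: row_sub.
apply/row_subP => i; rewrite row_mul rowK.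
case: (enum_val i) => [[f tau] k]; rewrite ind_rel_mean.
by apply: scalemx_sub; apply: summx_sub => g _; apply: rel_sub.
Qed.

Lemma rank_ind_rels_collapse (f0 : hom c d) :
  \rank (ind_rels V d *m ind_collapse) = \rank (coinv_rels V).
Proof.
apply/eqP; rewrite eqn_leq; apply/andP; split; apply: mxrankS; apply/row_subP => r.
  rewrite row_mul rowK; case: (enum_val r) => [[f tau] k].
  rewrite ind_rel_collapse.
  have -> : coinv_rel (tau, k) = row (enum_rank (tau, k)) (coinv_rels V).
    by rewrite rowK enum_rankK.
  exact: row_sub.
rewrite rowK; case: (enum_val r) => tau k; rewrite -(ind_rel_collapse f0).
have -> : rel (f0, tau, k) = row (enum_rank (f0, tau, k)) (ind_rels V d).
  by rewrite rowK enum_rankK.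
by rewrite -row_mul row_sub.
Qed.

Lemma expect_ind_charE (B := row_base (ind_rels V d)) :
  expect (ind_char V (d:=d)) = \tr ind_mean - \tr (B *m ind_mean *m pinvmx B).
Proof.
rewrite /expect /ind_char /ind_mean /= sumrB mulrBr mxtraceZ raddf_sum.
by rewrite -scalemxAr -scalemxAl mxtraceZ mulmx_sumr mulmx_suml raddf_sum.
Qed.

Lemma expect_ind_char_nonempty (f0 : hom c d) :
  expect (ind_char V (d:=d)) = (coinv_dim V)%:R.
Proof.
have rels_base := eq_row_base (ind_rels V d).
rewrite expect_ind_charE mxtrace_idem ?(ind_mean_idem f0) //.
rewrite mxtrace_compress_idem; last first.
- by rewrite (eqmxMr _ rels_base) rels_base ind_rels_mean_sub.
- exact: row_base_free.
- exact: ind_mean_idem.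
rewrite (eqmxMr _ rels_base) (rank_ind_mean f0) ind_meanE mulmxA.
rewrite (mxrankMfree _ (ind_spread_free f0)) (rank_ind_rels_collapse f0).
by rewrite natrB ?rank_leq_col.
Qed.

Lemma expect_ind_char_empty : #|hom c d| = 0%N -> expect (ind_char V (d:=d)) = 0.
Proof.
move=> no_hom; have m0 : m = 0%N by rewrite card_prod no_hom.
rewrite /expect /ind_char big1 ?mulr0 // => s _.
by rewrite !mxtrace_dim0 ?subr0 //; apply/eqP; rewrite -leqn0 -m0 rank_leq_col.
Qed.

Lemma expect_ind_char :
  expect (ind_char V (d:=d)) = (coinv_dim V * (0 < #|hom c d|))%:R.
Proof.
case: (posnP #|hom c d|) => [no_hom | /card_gt0P [f0 _]].
  by rewrite muln0 expect_ind_char_empty.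
by rewrite muln1 (expect_ind_char_nonempty f0).
Qed.

End InducedMean.

Lemma expect_free_char (M : free_module C) d : expect (free_char M (d:=d)) =
  (\sum_(V <- M) coinv_dim V * (0 < #|hom (rd_obj V) d|))%N%:R.
Proof.
by rewrite /free_char expect_sum natr_sum; apply: eq_bigr => V _; apply: expect_ind_char.
Qed.

End FIType.

Theorem mainTheorem13 (C : category) (HC : FI_type C) :
  (forall (c : obj C) (P : charpoly C),
      is_charpoly P -> charpoly_deg_le P c ->
      forall d e : obj C, le_obj c d -> le_obj c e ->
        expect (cp_eval P (d:=d)) = expect (cp_eval P (d:=e))) /\
  (forall M : free_module C, (forall V, List.In V M -> is_rep V) ->
      (forall d : obj C, exists k : nat, expect (free_char M (d:=d)) = k%:R) /\
      (forall d e : obj C, le_obj d e ->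
        expect (free_char M (d:=d)) <= expect (free_char M (d:=e)))).
Proof.
split=> [c P P_classes P_deg d e cd ce | M _].
  by rewrite !(expect_cp_eval HC P_classes P_deg) //.
split=> [d | d e de]; rewrite !(expect_free_char HC); first by eexists.
rewrite ler_nat; apply: leq_sum => V _.
by rewrite leq_mul2l (hom_nonempty_mono _ de) orbT.
Qed.
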